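(* Let $M$ be a submanifold of the Euclidean space $\mathbb{E}^m$ with induced metric $g$, position vector field $\mathbf{x}=\mathbf{x}^T+\mathbf{x}^N$ (tangential and normal components), and let $\beta,\gamma,\delta$ be smooth functions on $M$. Then $(M,g,\mathbf{x}^T,\beta,\gamma,\delta)$ is a generalized soliton, i.e. $\frac12\mathcal{L}_{\mathbf{x}^T}g+\beta\,\mathrm{Ric}=\gamma g+\delta\,(\mathbf{x}^T)^\flat\otimes(\mathbf{x}^T)^\flat$, if and only if the Ricci tensor of $M$ satisfies $$\beta\,\mathrm{Ric}(X,Y)=(\gamma-1)g(X,Y)+\delta\,g(\mathbf{x}^T,X)g(\mathbf{x}^T,Y)-g(A_{\mathbf{x}^N}X,Y)$$ for all vector fields $X,Y$ tangent to $M$.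
   Context: $A_\zeta$ denotes the shape operator of $M$ in $\mathbb{E}^m$ with respect to a normal vector field $\zeta$, defined by the Weingarten formula $\widetilde\nabla_X\zeta=-A_\zeta X+D_X\zeta$ ($\widetilde\nabla$ the Euclidean connection, $D$ the normal connection). $(\mathbf{x}^T)^\flat=g(\mathbf{x}^T,\cdot)$. *)

(* Local-coordinate formalization of a submanifold
   of E^m given by a parametrization (immersion) phi : U (open in R^n) -> R^m. *)
From HB Require Import structures.
From mathcomp Require Import all_boot all_order all_algebra.
From mathcomp Require Import all_classical all_reals all_analysis.
Set Implicit Arguments. Unset Strict Implicit. Unset Printing Implicit Defensive.
Import Order.TTheory GRing.Theory Num.Theory.
Import numFieldNormedType.Exports.
Local Open Scope classical_set_scope.
Local Open Scope ring_scope.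

Section Geom.
Variables (R : realType) (n m : nat).

Definition ebas (i : 'I_n) : 'rV[R]_n := delta_mx 0 i.

Definition pd {W : normedModType R} (i : 'I_n) (f : 'rV[R]_n -> W) (u : 'rV[R]_n) : W :=
  'D_(ebas i) f u.

Definition iterD {W : normedModType R} (s : seq 'I_n) (f : 'rV[R]_n -> W) : 'rV[R]_n -> W :=
  foldr (fun i g => pd i g) f s.

Definition smooth_on {W : normedModType R} (U : set 'rV[R]_n) (f : 'rV[R]_n -> W) : Prop :=
  forall (s : seq 'I_n) (i : 'I_n) (u : 'rV[R]_n), U u -> derivable (iterD s f) u (ebas i).

Definition dotv (a b : 'rV[R]_m) : R := \sum_(k < m) a 0 k * b 0 k.

Variable phi : 'rV[R]_n -> 'rV[R]_m.

Definition dphi (i : 'I_n) (u : 'rV[R]_n) : 'rV[R]_m := pd i phi u.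

Definition jac (u : 'rV[R]_n) : 'M[R]_(n, m) := \matrix_(i < n) dphi i u.

Definition gmet (i j : 'I_n) (u : 'rV[R]_n) : R := dotv (dphi i u) (dphi j u).
Definition gmat (u : 'rV[R]_n) : 'M[R]_n := \matrix_(i, j) gmet i j u.
Definition ginv (u : 'rV[R]_n) : 'M[R]_n := invmx (gmat u).

(* coefficients of the tangential part x^T of the position vector x = phi *)
Definition xTc (k : 'I_n) (u : 'rV[R]_n) : R :=
  \sum_(l < n) ginv u k l * dotv (phi u) (dphi l u).
Definition xT (u : 'rV[R]_n) : 'rV[R]_m := \sum_(k < n) xTc k u *: dphi k u.
Definition xN (u : 'rV[R]_n) : 'rV[R]_m := phi u - xT u.

Definition xTflat (i : 'I_n) (u : 'rV[R]_n) : R := dotv (xT u) (dphi i u).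

Definition lieg (i j : 'I_n) (u : 'rV[R]_n) : R :=
  \sum_(k < n) (xTc k u * pd k (gmet i j) u
                + gmet k j u * pd i (xTc k) u
                + gmet i k u * pd j (xTc k) u).

(* g(A_{x^N} d_i, d_j), from Weingarten: A_zeta X = -(tangential part of
   tilde-nabla_X zeta), i.e. g(A_zeta X, Y) = - <tilde-nabla_X zeta, Y> *)
Definition shapeN (i j : 'I_n) (u : 'rV[R]_n) : R :=
  - dotv (pd i xN u) (dphi j u).

Definition chris (k i j : 'I_n) (u : 'rV[R]_n) : R :=
  2^-1 * \sum_(l < n) ginv u k l *
     (pd i (gmet j l) u + pd j (gmet i l) u - pd l (gmet i j) u).

Definition ricci (i j : 'I_n) (u : 'rV[R]_n) : R :=
  \sum_(k < n) (pd k (chris k i j) u - pd j (chris k i k) u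
     + \sum_(p < n) (chris k k p u * chris p i j u - chris k j p u * chris p i k u)).

End Geom.

(* In a chart phi the statement reduces to the identity
   1/2 (L_{x^T} g)_ij = g_ij + g(A_{x^N} d_i, d_j).  Write x^T = sum_k c^k d_k phi.
   Differentiating <x^T, d_j phi> = <phi, d_j phi> along d_i gives
   sum_k (d_i c^k g_kj + c^k d_i g_kj) = g_ij + <phi, d_i d_j phi>, and differentiating
   <x^N, d_j phi> = 0 gives g(A_{x^N} d_i, d_j) = <x^N, d_i d_j phi>.  Adding the first
   identity to its (j, i) counterpart and using d_i d_j phi = d_j d_i phi yields the
   claim; the theorem is then a rearrangement of the soliton equation.

   Smoothness only provides the existence of all iterated partial derivatives, so the
   symmetry of second derivatives needs an argument without continuity assumptions:
   the mixed derivative is separately continuous on every coordinate plane, hence, by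
   Baire's theorem, jointly continuous at points arbitrarily close to any given one;
   Schwarz's mean value argument applies at those points, and continuity along one
   line carries the equality back. *)

From Pilot Require Import Defs.
From HB Require Import structures.
From mathcomp Require Import all_boot all_order all_algebra.
From mathcomp Require Import all_classical all_reals all_analysis.
From mathcomp Require Import ring lra.
Set Implicit Arguments. Unset Strict Implicit. Unset Printing Implicit Defensive.
Import Order.TTheory GRing.Theory Num.Theory.
Import numFieldNormedType.Exports.
Local Open Scope classical_set_scope.
Local Open Scope ring_scope.

(** * Points of joint continuity *)

Section RealBalls.
Variable R : realType.

Lemma openR_dist (A : set R) :
  (forall x, A x -> exists2 d, 0 < d & forall y, `|x - y| < d -> A y) -> open A.
Proof.
move=> H; rewrite openE => x Ax; apply/nbhs_ballP.
have [d d0 Hd] := H x Ax; exists d => // y; rewrite -ball_normE.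
Qed.

Lemma open_dist (A : set R) x : open A -> A x ->
  exists2 d, 0 < d & forall y, `|x - y| < d -> A y.
Proof.
move=> oA Ax; have /nbhs_ballP[d d0 Hd] : nbhs x A by exact: open_nbhs_nbhs.
by exists d => // y xy; apply: Hd; rewrite -ball_normE.
Qed.

Lemma denseR_dist (S : set R) :
  (forall x d, 0 < d -> exists y, `|x - y| < d /\ S y) -> dense S.
Proof.
move=> H O [x Ox] oO; have [d d0 Hd] := open_dist oO Ox.
by have [y [xy Sy]] := H x d d0; exists y; split => //; exact: Hd.
Qed.

Lemma dense_dist (S : set R) x d : dense S -> 0 < d ->
  exists y, `|x - y| < d /\ S y.
Proof.
move=> dS d0.
have oB : open [set y | `|x - y| < d].
  apply: openR_dist => y xy; exists (d - `|x - y|); first by rewrite subr_gt0.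
  by move=> z /= yz; have := ler_distD y x z; lra.
have xB : `|x - x| < d by rewrite subrr normr0.
by have [y [/= xy Sy]] := dS _ (ex_intro _ x xB) oB; exists y.
Qed.

Lemma continuous_dist (f : R -> R) x : {for x, continuous f} ->
  forall e, 0 < e -> exists2 d, 0 < d & forall y, `|y - x| < d -> `|f y - f x| < e.
Proof.
move=> cf e e0.
have /nbhs_ballP[d d0 Hd] : nbhs x [set y | `|f x - f y| < e].
  exact: (cvgrPdist_lt _ _).1 cf e e0.
by exists d => // y xy; rewrite distrC; apply: Hd; rewrite -ball_normE /= distrC.
Qed.

Lemma exists_pos_le2 (d1 d2 : R) : 0 < d1 -> 0 < d2 ->
  exists2 d, 0 < d & d <= d1 /\ d <= d2.
Proof.
move=> h1 h2; exists (Num.min d1 d2); first by rewrite lt_min h1 h2.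
by rewrite !ge_min !lexx orbT.
Qed.

End RealBalls.

Lemma exists_natSinv_lt (R : realType) (e : R) : 0 < e ->
  exists N : nat, N.+1%:R^-1 < e.
Proof.
by move=> e0; have /filter_ex[N HN] := near_infty_natSinv_lt (PosNum e0); exists N.
Qed.

Section SeparateContinuity.
Variables (R : realType) (g : R -> R -> R) (r : R).
Hypothesis r_gt0 : 0 < r.
Hypothesis cont1 : forall s t, `|s| < r -> `|t| < r -> {for s, continuous (g^~ t)}.
Hypothesis cont2 : forall s t, `|s| < r -> `|t| < r -> {for t, continuous (g s)}.

Definition deviating_set a b e tau := [set s | s < a \/ b < s \/
  exists t, `|t| <= tau /\ e < `|g s t - g s 0|].

Lemma deviating_set_open a b e tau : - r < a -> b < r -> tau < r ->
  open (deviating_set a b e tau).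
Proof.
move=> ra br tau_r; apply: openR_dist => s Ws.
have [sa|ge_sa] := ltP s a.
  exists (a - s); rewrite ?subr_gt0 // => y.
  by rewrite ltr_distlC => /andP[y1 y2]; left; lra.
have [bs|sb] := ltP b s.
  exists (s - b); rewrite ?subr_gt0 // => y.
  by rewrite ltr_distlC => /andP[y1 y2]; right; left; lra.
have [t [t_tau gt]] : exists t, `|t| <= tau /\ e < `|g s t - g s 0|.
  by case: Ws => [|[|//]]; lra.
have sr : `|s| < r by rewrite ltr_norml; apply/andP; lra.
have tr : `|t| < r by apply: le_lt_trans t_tau tau_r.
have r0 : `|0 : R| < r by rewrite normr0.
have c0 : 0 < (`|g s t - g s 0| - e) / 2 by rewrite divr_gt0 // subr_gt0.
have [d1 d10 H1] := continuous_dist (cont1 sr tr) c0.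
have [d2 d20 H2] := continuous_dist (cont1 sr r0) c0.
have [d d0 [dd1 dd2]] := exists_pos_le2 d10 d20.
exists d => // y sy; right; right; exists t; split => //.
rewrite distrC in sy.
have := H1 y (lt_le_trans sy dd1); have := H2 y (lt_le_trans sy dd2).
have := ler_distD (g y t) (g s t) (g s 0).
have := ler_distD (g y 0) (g y t) (g s 0).
rewrite [`|g s t - g y t|]distrC; lra.
Qed.

(* Baire: the open sets [deviating_set a b e (tau M)] cannot all be dense, since
   every [g s] is continuous at [0]; a ball avoiding one of them does the job. *)
Lemma uniform_near_axis_somewhere e a b : 0 < e -> a < b -> - r < a -> b < r ->
  exists x1 rho tau, [/\ 0 < rho, 0 < tau & forall s, `|x1 - s| < rho ->
    a <= s <= b /\ forall t, `|t| <= tau -> `|g s t - g s 0| <= e].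
Proof.
move=> e0 ab ra br.
have r0 : `|0 : R| < r by rewrite normr0.
pose tau (M : nat) := Num.min (r / 2) M.+1%:R^-1.
have tau_gt0 M : 0 < tau M by rewrite lt_min invr_gt0 ltr0n andbT divr_gt0.
have tau_lt M : tau M < r.
  by rewrite gt_min; apply/orP; left; rewrite ltr_pdivrMr // ltr_pMr // ltr1n.
pose W M := deviating_set a b e (tau M).
have oW M : open (W M) by exact: deviating_set_open.
have [M ndW] : exists M, ~ dense (W M).
  apply/existsNP => dW.
  have ba : 0 < (b - a) / 2 by rewrite divr_gt0 // subr_gt0.
  have [y [+ Wy]] := dense_dist ((a + b) / 2)
    (Baire (fun M => conj (oW M) (dW M))) ba.
  rewrite ltr_distlC => /andP[y1 y2].
  have yr : `|y| < r by rewrite ltr_norml; apply/andP; lra.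
  have [d d0 Hd] := continuous_dist (cont2 yr r0) e0.
  have [M Md] := exists_natSinv_lt d0.
  case: (Wy M I) => [|[|[t [tM gt]]]]; try lra.
  suff : `|g y t - g y 0| < e by lra.
  by apply: Hd; rewrite subr0 (le_lt_trans tM) // (le_lt_trans _ Md) // ge_min lexx orbT.
have [Op [[x1 [oOp Opx1]] OpW]] := denseNE ndW.
have [rho rho0 Hrho] := open_dist oOp Opx1.
exists x1, rho, (tau M); split => // s x1s.
have notW : ~ W M s by move=> Ws; rewrite -[False]/(set0 s) -OpW; split => //; exact: Hrho.
split.
  by apply/andP; split; rewrite leNgt; apply/negP => h; apply: notW; [left|right; left].
move=> t tM; rewrite leNgt; apply/negP => gt.
by apply: notW; right; right; exists t.
Qed.

Definition small_osc s e := exists2 d, 0 < d & forall s1 s2 t1 t2,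
  `|s - s1| < d -> `|s - s2| < d -> `|t1| < d -> `|t2| < d ->
  `|g s1 t1 - g s2 t2| <= e.

Lemma small_osc_somewhere e a b : 0 < e -> a < b -> - r < a -> b < r ->
  exists2 x1, a < x1 < b & small_osc x1 e.
Proof.
move=> e0 ab ra br.
have e4 : 0 < e / 4 by rewrite divr_gt0.
have r0 : `|0 : R| < r by rewrite normr0.
have [x1 [rho [tau [rho0 tau0 near_x1]]]] := uniform_near_axis_somewhere e4 ab ra br.
have rho2 : 0 < rho / 2 by rewrite divr_gt0.
have ax1 : a < x1.
  have /near_x1[/andP[+ _] _] : `|x1 - (x1 - rho / 2)| < rho.
    by rewrite opprB addrC subrK gtr0_norm // ltr_pdivrMr // ltr_pMr // ltr1n.
  lra.
have x1b : x1 < b.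
  have /near_x1[/andP[_ +] _] : `|x1 - (x1 + rho / 2)| < rho.
    by rewrite opprD addrA subrr sub0r normrN gtr0_norm // ltr_pdivrMr // ltr_pMr // ltr1n.
  lra.
have x1r : `|x1| < r by rewrite ltr_norml; apply/andP; lra.
have [d1 d10 cont_x1] := continuous_dist (cont1 x1r r0) e4.
have [d2 d20 [d2rho d2tau]] := exists_pos_le2 rho0 tau0.
have [d d0 [dd1 dd2]] := exists_pos_le2 d10 d20.
exists x1; first by rewrite ax1.
exists d => // s1 s2 t1 t2 h1 h2 h3 h4.
have [_ /(_ t1) g1] := near_x1 s1 (lt_le_trans h1 (le_trans dd2 d2rho)).
have [_ /(_ t2) g2] := near_x1 s2 (lt_le_trans h2 (le_trans dd2 d2rho)).
have := g1 (ltW (lt_le_trans h3 (le_trans dd2 d2tau))).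
have := g2 (ltW (lt_le_trans h4 (le_trans dd2 d2tau))).
rewrite distrC in h1; rewrite distrC in h2.
have := cont_x1 s1 (lt_le_trans h1 dd1); have := cont_x1 s2 (lt_le_trans h2 dd1).
have := ler_distD (g s1 0) (g s1 t1) (g s2 t2).
have := ler_distD (g x1 0) (g s1 0) (g s2 t2).
have := ler_distD (g s2 0) (g x1 0) (g s2 t2).
rewrite [`|g x1 0 - g s2 0|]distrC [`|g s2 0 - g s2 t2|]distrC; lra.
Qed.

Lemma small_osc_open e : open [set s | small_osc s e].
Proof.
apply: openR_dist => s [d d0 osc_s]; exists (d / 2); first by rewrite divr_gt0.
move=> y sy; exists (d / 2); first by rewrite divr_gt0.
move=> s1 s2 t1 t2 h1 h2 h3 h4; apply: osc_s; try lra.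
- by have := ler_distD y s s1; lra.
- by have := ler_distD y s s2; lra.
Qed.

Lemma joint_continuity_point rho : 0 < rho ->
  exists s0, `|s0| < rho /\ forall e, 0 < e -> small_osc s0 e.
Proof.
move=> rho0.
have r4 : 0 < r / 4 by rewrite divr_gt0.
have [rh rh0 [rh_rho rh_r]] := exists_pos_le2 rho0 r4.
pose O (N : nat) := [set s | rh / 2 < `|s|] `|` [set s | small_osc s N.+1%:R^-1].
have oO N : open (O N).
  apply: openU; last exact: small_osc_open.
  apply: openR_dist => s /= hs; exists (`|s| - rh / 2); first by rewrite subr_gt0.
  by move=> y sy; have := ler_distD y s 0; rewrite !subr0; lra.
have dO N : dense (O N).
  apply: denseR_dist => x d d0.
  have [hx|hx] := ltP (rh / 2) `|x|.
    by exists x; rewrite subrr normr0; split => //; left.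
  have [d1 d10 [d1d d1r]] := exists_pos_le2 d0 r4.
  move: hx; rewrite ler_norml => /andP[x1 x2].
  have eN : 0 < N.+1%:R^-1 :> R by rewrite invr_gt0.
  have [y /andP[y1 y2] osc_y] : exists2 y, x - d1 < y < x + d1 & small_osc y N.+1%:R^-1.
    by apply: (small_osc_somewhere eN); lra.
  by exists y; split; [rewrite ltr_distlC; apply/andP; lra|right].
have rh2 : 0 < rh / 2 by rewrite divr_gt0.
have [s0 [hs0 Os0]] := dense_dist 0 (Baire (fun N => conj (oO N) (dO N))) rh2.
rewrite sub0r normrN in hs0.
exists s0; split; first lra.
move=> e e0; have [N Ne] := exists_natSinv_lt e0.
have [/=|[d d0 osc_s0]] := Os0 N I; first lra.
by exists d => // s1 s2 t1 t2 h1 h2 h3 h4; apply: le_trans (osc_s0 _ _ _ _ h1 h2 h3 h4) (ltW Ne).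
Qed.

End SeparateContinuity.

(** * Symmetry of second derivatives *)

Lemma MVT_dist (R : realType) (F dF : R -> R) (a b : R) :
  (forall x, `|x - a| <= `|b - a| -> is_derive x 1 F (dF x)) ->
  exists c, `|c - a| <= `|b - a| /\ F b - F a = dF c * (b - a).
Proof.
have segment (a' b' : R) : a' <= b' -> (forall x, a' <= x <= b' -> is_derive x 1 F (dF x)) ->
    exists2 c, a' <= c <= b' & F b' - F a' = dF c * (b' - a').
  move=> ab HF.
  have cF : {within `[a', b'], continuous F}.
    apply: derivable_within_continuous => x; rewrite in_itv /= => /HF.
    by case.
  have dF_open x : x \in `]a', b'[ -> is_derive x 1 F (dF x).
    by rewrite in_itv /= => /andP[x1 x2]; apply: HF; rewrite !ltW.
  by have [c] := MVT_segment ab dF_open cF; rewrite in_itv /=; exists c.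
move=> HF; have [ab|ba] := leP a b.
  have nab : `|b - a| = b - a by rewrite ger0_norm // subr_ge0.
  have [|c /andP[c1 c2] E] := segment a b ab.
    by move=> x /andP[x1 x2]; apply: HF; rewrite nab ler_norml; apply/andP; lra.
  by exists c; rewrite nab ler_norml; split => //; apply/andP; lra.
have nba : `|b - a| = a - b by rewrite ltr0_norm ?opprB // subr_lt0.
have [|c /andP[c1 c2] E] := segment b a (ltW ba).
  by move=> x /andP[x1 x2]; apply: HF; rewrite nba ler_norml; apply/andP; lra.
exists c; rewrite nba ler_norml; split; first by apply/andP; lra.
by rewrite -opprB E -mulrN opprB.
Qed.

Section Lines.
Variables (R : realType) (V : normedModType R).
Implicit Types (f : V -> R) (x v : V).

Lemma line_is_derive f x v (s : R) : derivable f (x + s *: v) v ->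
  is_derive s 1 (fun s' : R => f (x + s' *: v)) ('D_v f (x + s *: v)).
Proof.
move=> df.
have E : (fun h : R => h^-1 *: (((fun s' => f (x + s' *: v)) \o shift s) (h *: 1)
            - f (x + s *: v))) =
         (fun h => h^-1 *: ((f \o shift (x + s *: v)) (h *: v) - f (x + s *: v))).
  by apply/funext => h /=; rewrite [h *: 1]mulr1 scalerDl addrCA.
have D : derivable (fun s' : R => f (x + s' *: v)) s 1 by rewrite /derivable E.
by apply: DeriveDef => //; rewrite /derive E.
Qed.

Lemma line_continuous f x v (s : R) : derivable f (x + s *: v) v ->
  {for s, continuous (fun s' : R => f (x + s' *: v))}.
Proof.
by move=> /line_is_derive[/derivable1_diffP/differentiable_continuous].
Qed.

Lemma plane_is_derive f x v w (s t : R) : derivable f (x + s *: v + t *: w) v ->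
  is_derive s 1 (fun s' : R => f (x + s' *: v + t *: w)) ('D_v f (x + s *: v + t *: w)).
Proof.
rewrite addrAC => /line_is_derive; rewrite -addrAC.
by under [fun s' => _]eq_fun do rewrite addrAC.
Qed.

Lemma line_cvg f x v : derivable f x v ->
  (fun t : R => t^-1 * (f (x + t *: v) - f x)) @ 0^' --> 'D_v f x.
Proof.
move=> df.
suff -> : (fun t : R => t^-1 * (f (x + t *: v) - f x)) =
    (fun t => t^-1 *: ((f \o shift x) (t *: v) - f x)) by [].
by apply: funext => t /=; rewrite [t *: v + x]addrC.
Qed.

End Lines.

Section Schwarz.
Variables (R : realType) (V : normedModType R) (f : V -> R) (x v w : V) (r : R).
Hypothesis r_gt0 : 0 < r.
Hypothesis derivable_box : forall s t, `|s| < r -> `|t| < r ->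
  [/\ derivable f (x + s *: v + t *: w) v, derivable f (x + s *: v + t *: w) w
    & derivable ('D_v f) (x + s *: v + t *: w) w].

Let r0 : `|0 : R| < r. Proof. by rewrite normr0. Qed.

Lemma second_difference_mvt h t : `|h| < r -> `|t| < r ->
  exists s t', [/\ `|s| <= `|h|, `|t'| <= `|t| &
    f (x + h *: v + t *: w) - f (x + h *: v) - (f (x + t *: w) - f x)
    = h * t * 'D_w ('D_v f) (x + s *: v + t' *: w)].
Proof.
move=> hr tr.
have line_v (t' s : R) : `|s| < r -> `|t'| < r -> is_derive s 1
    (fun s' => f (x + s' *: v + t' *: w)) ('D_v f (x + s *: v + t' *: w)).
  by move=> sr t'r; have [dfv _ _] := derivable_box sr t'r; exact: plane_is_derive.
have [|s [sh E1]] := MVT_dist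
  (F := fun s => f (x + s *: v + t *: w) - f (x + s *: v + 0 *: w))
  (dF := fun s => 'D_v f (x + s *: v + t *: w) - 'D_v f (x + s *: v + 0 *: w))
  (a := 0) (b := h).
  move=> s; rewrite !subr0 => sh; have sr := le_lt_trans sh hr.
  by have := is_deriveB (line_v t s sr tr) (line_v 0 s sr r0).
rewrite !subr0 in sh E1; have sr := le_lt_trans sh hr.
have [|t' [t't E2]] := MVT_dist
  (F := fun t' => 'D_v f (x + s *: v + t' *: w))
  (dF := fun t' => 'D_w ('D_v f) (x + s *: v + t' *: w)) (a := 0) (b := t).
  move=> t'; rewrite !subr0 => t't; apply: line_is_derive.
  by have [_ _] := derivable_box sr (le_lt_trans t't tr).
rewrite !subr0 in t't E2.
exists s, t'; split => //.
move: E1 E2 => /=; rewrite !scale0r !addr0 => -> ->; ring.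
Qed.

Lemma difference_quotient_bound e d h : d <= r ->
  (forall s t, `|s| < d -> `|t| < d ->
     `|'D_w ('D_v f) (x + s *: v + t *: w) - 'D_w ('D_v f) x| <= e) ->
  `|h| < d ->
  `|'D_w f (x + h *: v) - 'D_w f x - h * 'D_w ('D_v f) x| <= `|h| * e.
Proof.
move=> dr G_near hd; have hr := lt_le_trans hd dr.
have d0 : 0 < d := le_lt_trans (normr_ge0 h) hd.
have [_ + _] := derivable_box hr r0; rewrite scale0r addr0 => dfh.
have [_ + _] := derivable_box r0 r0; rewrite !scale0r !addr0 => dfx.
rewrite distrC.
suff : closed_ball_ Num.norm (h * 'D_w ('D_v f) x) (`|h| * e)
  ('D_w f (x + h *: v) - 'D_w f x) by [].
apply: (closed_cvg _ (@closed_closed_ball_ _ _ _ _) _ _ (cvgB (line_cvg dfh) (line_cvg dfx))).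
near=> t.
have td : `|t| < d by near: t; exact: dnbhs0_lt d0.
have t0 : t != 0 by near: t; exact: nbhs_dnbhs_neq.
have [s [t' [sh t't E]]] := second_difference_mvt hr (lt_le_trans td dr).
rewrite /closed_ball_ /= !fctE -mulrBr E [h * t]mulrC -mulrA mulKf // -mulrBr normrM ler_wpM2l //.

by rewrite distrC; apply: G_near; [apply: le_lt_trans hd|apply: le_lt_trans td].
Unshelve. all: by end_near.
Qed.

Lemma schwarz_joint_continuity :
  (forall e, 0 < e -> exists2 d, 0 < d & forall s t, `|s| < d -> `|t| < d ->
     `|'D_w ('D_v f) (x + s *: v + t *: w) - 'D_w ('D_v f) x| <= e) ->
  'D_v ('D_w f) x = 'D_w ('D_v f) x.
Proof.
move=> G_cont; apply: cvg_lim; first exact: norm_hausdorff.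
apply/cvgrPdist_le => e e0.
have [d d0 G_near] := G_cont e e0.
have [d' d'0 [d'd d'r]] := exists_pos_le2 d0 r_gt0.
near=> h.
have hd : `|h| < d' by near: h; exact: dnbhs0_lt d'0.
have h0 : h != 0 by near: h; exact: nbhs_dnbhs_neq.
rewrite /= [h *: v + x]addrC -[X in `|X - _|](mulKf h0) -[h^-1 *: _]/(h^-1 * _).
rewrite -mulrBr normrM normfV ler_pdivrMl ?normr_gt0 // distrC.
apply: difference_quotient_bound d'r _ hd => s t hs ht.
by apply: G_near; apply: lt_le_trans d'd.
Unshelve. all: by end_near.
Qed.

End Schwarz.

Lemma eq0_continuous_dense (R : realType) (a b : R -> R) :
  {for 0, continuous a} -> {for 0, continuous b} ->
  (forall rho, 0 < rho -> exists2 s, `|s| < rho & a s = b s) -> a 0 = b 0.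
Proof.
move=> ca cb ab; apply/eqP; apply/negPn/negP => neq.
have e0 : 0 < `|a 0 - b 0| / 2 by rewrite divr_gt0 // normr_gt0 subr_eq0.
have [da da0 near_a] := continuous_dist ca e0.
have [db db0 near_b] := continuous_dist cb e0.
have [d d0 [dda ddb]] := exists_pos_le2 da0 db0.
have [s sd abs] := ab d d0; rewrite -[s]subr0 in sd.
have := near_a s (lt_le_trans sd dda); have := near_b s (lt_le_trans sd ddb).
have := ler_distD (a s) (a 0) (b 0); rewrite abs [`|a 0 - b s|]distrC; lra.
Qed.

Section Clairaut.
Variables (R : realType) (V : normedModType R).

Lemma open_plane_nbhs (U : set V) (u v w : V) : open U -> U u ->
  exists2 r, 0 < r & forall s t : R, `|s| < r -> `|t| < r -> U (u + s *: v + t *: w).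
Proof.
move=> oU Uu; have /nbhs_ballP[eps eps0 ball_U] : nbhs u U by exact: open_nbhs_nbhs.
pose K := `|v| + `|w| + 1.
have K0 : 0 < K by rewrite /K; have := normr_ge0 v; have := normr_ge0 w; lra.
exists (eps / K) => [|s t hs ht]; first by rewrite divr_gt0.
apply: ball_U; rewrite -ball_normE /= -addrA opprD addrA subrr sub0r normrN.
apply: le_lt_trans (ler_normD _ _) _; rewrite !normrZ.
have : (`|s| * `|v| + `|t| * `|w|) <= eps / K * (`|v| + `|w|).
  by rewrite mulrDr; apply: lerD; apply: ler_wpM2r; rewrite // ltW.
have : eps / K * K = eps by rewrite divfK // gt_eqF.
rewrite /K; have := divr_gt0 eps0 K0; nra.
Qed.

Lemma clairaut (f : V -> R) (U : set V) (u v w : V) : open U -> U u ->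
  (forall x, U x -> derivable f x v) -> (forall x, U x -> derivable f x w) ->
  (forall x, U x -> derivable ('D_v f) x w) ->
  (forall x, U x -> derivable ('D_w ('D_v f)) x v) ->
  (forall x, U x -> derivable ('D_w ('D_v f)) x w) ->
  derivable ('D_v ('D_w f)) u v ->
  'D_v ('D_w f) u = 'D_w ('D_v f) u.
Proof.
move=> oU Uu dfv dfw dDvf_w dG_v dG_w dH_v.
have [r r0 Ur] := open_plane_nbhs v w oU Uu.
pose g s t := 'D_w ('D_v f) (u + s *: v + t *: w).
have cont1 s t : `|s| < r -> `|t| < r -> {for s, continuous (g^~ t)}.
  move=> sr tr.
  by have /plane_is_derive[/derivable1_diffP/differentiable_continuous] := dG_v _ (Ur _ _ sr tr).
have cont2 s t : `|s| < r -> `|t| < r -> {for t, continuous (g s)}.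
  by move=> sr tr; have /line_continuous := dG_w _ (Ur _ _ sr tr).
have u0 : u = u + 0 *: v by rewrite scale0r addr0.
have dH0 : derivable ('D_v ('D_w f)) (u + 0 *: v) v by rewrite -u0.
have dG0 : derivable ('D_w ('D_v f)) (u + 0 *: v) v by rewrite -u0; exact: dG_v.
rewrite [in LHS]u0 [in RHS]u0.
apply: (eq0_continuous_dense (line_continuous dH0) (line_continuous dG0)).
move=> rho rho0.
have r2 : 0 < r / 2 by rewrite divr_gt0.
have [rho' rho'0 [rho'rho rho'r]] := exists_pos_le2 rho0 r2.
have [s0 [s0rho small]] := joint_continuity_point r0 cont1 cont2 rho'0.
have s0r : `|s0| < r / 2 := lt_le_trans s0rho rho'r.
exists s0; first exact: lt_le_trans s0rho rho'rho.
have shift_box s t : u + s0 *: v + s *: v + t *: w = u + (s0 + s) *: v + t *: w.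
  by rewrite scalerDl addrA.
have box_r s t : `|s| < r / 2 -> `|t| < r / 2 -> U (u + s0 *: v + s *: v + t *: w).
  move=> sr tr; rewrite shift_box; apply: Ur; last lra.
  by have := ler_normD s0 s; lra.
apply: (schwarz_joint_continuity r2).
  move=> s t sr tr; have U_st := box_r s t sr tr.
  by split; [exact: dfv|exact: dfw|exact: dDvf_w].
move=> e e0; have [d d0 osc_s0] := small e e0.
exists d => // s t sd td.
have := osc_s0 (s0 + s) s0 t 0; rewrite /g scale0r addr0 shift_box; apply; rewrite ?normr0 //.
by rewrite opprD addrA subrr sub0r normrN.
by rewrite subrr normr0.
Qed.

End Clairaut.

(** * Calculus in a chart *)

Section DerivableAlgebra.
Variables (R : realType) (V : normedModType R).
Implicit Types (f g : V -> R) (x v : V).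

Lemma derivable_sumr (I : Type) (r : seq I) (P : pred I) (F : I -> V -> R) x v :
  (forall i, P i -> derivable (F i) x v) ->
  derivable (fun y => \sum_(i <- r | P i) F i y) x v.
Proof.
move=> dF; rewrite -fct_sumE; elim/big_ind: _ => [|f1 f2|i /dF //]; first exact: derivable_cst.
exact: derivableD.
Qed.

Lemma derivable_prodr (I : Type) (r : seq I) (P : pred I) (F : I -> V -> R) x v :
  (forall i, P i -> derivable (F i) x v) ->
  derivable (fun y => \prod_(i <- r | P i) F i y) x v.
Proof.
move=> dF; rewrite -fct_prodE; elim/big_ind: _ => [|f1 f2|i /dF //]; first exact: derivable_cst.
exact: derivableM.
Qed.

Lemma derive_sumr n (F : 'I_n -> V -> R) x v :
  (forall i, derivable (F i) x v) ->
  'D_v (fun y => \sum_i F i y) x = \sum_i 'D_v (F i) x.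
Proof. by move=> dF; rewrite -fct_sumE derive_sum. Qed.

Lemma derivable_mulr f g x v : derivable f x v -> derivable g x v ->
  derivable (fun y => f y * g y) x v.
Proof. exact: derivableM. Qed.

Lemma derive_mulr f g x v : derivable f x v -> derivable g x v ->
  'D_v (fun y => f y * g y) x = 'D_v f x * g x + f x * 'D_v g x.
Proof. by move=> df dg; rewrite (deriveM df dg) addrC mulrC. Qed.

End DerivableAlgebra.

Section DerivableMatrix.
Variables (R : realType) (V : normedModType R).

Lemma derivable_det p (M : V -> 'M[R]_p) x v :
  (forall a b, derivable (fun y => M y a b) x v) ->
  derivable (fun y => \det (M y)) x v.
Proof.
move=> dM; apply: derivable_sumr => s _; apply: derivable_mulr; first exact: derivable_cst.
by apply: derivable_prodr => k _; exact: dM.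
Qed.

Lemma derivable_invmx p (M : V -> 'M[R]_p) x v :
  (\forall y \near x, M y \in unitmx) ->
  (forall a b, derivable (fun y => M y a b) x v) ->
  forall k l, derivable (fun y => invmx (M y) k l) x v.
Proof.
move=> M_unit dM k l.
apply: (@near_eq_derivable _ _ _ (fun y => (\det (M y))^-1 * \adj (M y) k l)).
  by apply: filterS M_unit => y y_unit; rewrite /invmx y_unit [RHS]mxE.
apply: derivable_mulr.
  apply: derivableV; last exact: derivable_det.
  by rewrite -unitfE -unitmxE; apply: nbhs_singleton M_unit.
rewrite (_ : (fun y => _) = fun y => (-1) ^+ (l + k) * \det (row' l (col' k (M y)))).
  apply: derivable_mulr; first exact: derivable_cst.
  by apply: derivable_det => a b; under eq_fun do rewrite !mxE; exact: dM.
by apply/funext => y; rewrite mxE.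
Qed.

End DerivableMatrix.

Lemma gram_unitmx (R : realFieldType) p q (J : 'M[R]_(p, q)) :
  row_free J -> J *m J^T \in unitmx.
Proof.
move=> J_free; rewrite -row_free_unit; apply: inj_row_free => w JJw0.
have wJJ : (w *m J) *m (w *m J)^T = 0 by rewrite trmx_mul mulmxA -(mulmxA w) JJw0 mul0mx.
have wJ0 c : (w *m J) 0 c = 0.
  move: (w *m J) wJJ => a /(congr1 (fun A : 'M[R]_1 => A 0 0)) /eqP.
  rewrite mxE [X in _ == X]mxE psumr_eq0 => [/allP/(_ c (mem_index_enum c))|k _].
    by rewrite mxE -expr2 sqrf_eq0 => /eqP.
  by rewrite mxE -expr2 sqr_ge0.
apply/eqP; rewrite -(mulmx_free_eq0 _ J_free); apply/eqP/rowP => c.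
by rewrite wJ0 mxE.
Qed.

Section DotProduct.
Variables (R : realType) (m : nat).
Implicit Types a b c : 'rV[R]_m.

Lemma dotvC a b : dotv a b = dotv b a.
Proof. by apply: eq_bigr => k _; rewrite mulrC. Qed.

Lemma dotvBl a b c : dotv (a - b) c = dotv a c - dotv b c.
Proof. by rewrite /dotv -sumrB; apply: eq_bigr => k _; rewrite !mxE mulrBl. Qed.

Lemma dotv_suml n (s : 'I_n -> R) (a : 'I_n -> 'rV[R]_m) b :
  dotv (\sum_k s k *: a k) b = \sum_k s k * dotv (a k) b.
Proof.
rewrite /dotv; under eq_bigr do rewrite summxE big_distrl /=.
rewrite exchange_big /=; apply: eq_bigr => k _; rewrite big_distrr /=.
by apply: eq_bigr => c _; rewrite mxE mulrA.
Qed.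

Variable V : normedModType R.

Lemma derive_coord (F : V -> 'rV[R]_m) x v (c : 'I_m) : derivable F x v ->
  'D_v F x 0 c = 'D_v (fun y => F y 0 c) x.
Proof. by move=> dF; rewrite derive_mx // mxE. Qed.

Lemma derivable_dotv (F G : V -> 'rV[R]_m) x v :
  derivable F x v -> derivable G x v -> derivable (fun y => dotv (F y) (G y)) x v.
Proof.
move=> /derivable_mxP dF /derivable_mxP dG.
by apply: derivable_sumr => c _; exact: derivable_mulr.
Qed.

Lemma derive_dotv (F G : V -> 'rV[R]_m) x v :
  derivable F x v -> derivable G x v ->
  'D_v (fun y => dotv (F y) (G y)) x = dotv ('D_v F x) (G x) + dotv (F x) ('D_v G x).
Proof.
move=> dF dG; have /derivable_mxP dF' := dF; have /derivable_mxP dG' := dG.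
rewrite /dotv derive_sumr => [|c]; last exact: derivable_mulr.
rewrite -big_split; apply: eq_bigr => c _.
by rewrite derive_mulr // !derive_coord.
Qed.

End DotProduct.

(* The [k]-th summand of [lieg]; [a], [b], [e] stand for <d_i d_k phi, d_j phi>,
   <d_j d_k phi, d_i phi> and <d_k phi, d_i d_j phi>. *)
Lemma lieg_summand_split (R : comNzRingType) (a b e c Di Dj gkj gki gik dkij dikj djki : R) :
  gik = gki -> dikj = a + e -> djki = b + e -> dkij = a + b ->
  c * dkij + gkj * Di + gik * Dj
  = (Di * gkj + c * dikj) + (Dj * gki + c * djki) - 2 * (c * e).
Proof. by move=> -> -> -> ->; ring. Qed.

Lemma half_sum_split (R : numFieldType) (L S1 S2 T g P sh : R) :
  L = S1 + S2 - 2 * T -> S1 = g + P -> S2 = g + P -> sh = P - T -> 2^-1 * L = g + sh.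
Proof. by move=> -> -> -> ->; field. Qed.

Section Submanifold.
Variables (R : realType) (n m : nat) (U : set 'rV[R]_n) (phi : 'rV[R]_n -> 'rV[R]_m).
Hypotheses (oU : open U) (phi_smooth : smooth_on U phi)
  (phi_immersion : forall u, U u -> row_free (jac phi u)).

Definition partially_derivable (f : 'rV[R]_n -> R) :=
  forall x, U x -> forall i, derivable f x (ebas R i).

Lemma derive_eq_on (W : normedModType R) (f g : 'rV[R]_n -> W) x v : U x ->
  (forall y, U y -> f y = g y) -> 'D_v f x = 'D_v g x.
Proof.
move=> Ux fg; apply: near_eq_derive.
by apply: filterS (open_nbhs_nbhs (conj oU Ux)); exact: fg.
Qed.

Lemma derivable_eq_on (W : normedModType R) (f g : 'rV[R]_n -> W) x v : U x ->
  (forall y, U y -> f y = g y) -> derivable f x v -> derivable g x v.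
Proof.
move=> Ux fg; apply: near_eq_derivable.
by apply: filterS (open_nbhs_nbhs (conj oU Ux)); exact: fg.
Qed.

Lemma derivable_phi x i : U x -> derivable phi x (ebas R i).
Proof. exact: @phi_smooth [::] i x. Qed.

Lemma derivable_dphi j x i : U x -> derivable (dphi phi j) x (ebas R i).
Proof. exact: @phi_smooth [:: j] i x. Qed.

Lemma partially_derivable_gmet i j : partially_derivable (gmet phi i j).
Proof. by move=> x Ux k; apply: derivable_dotv; exact: derivable_dphi. Qed.

Lemma gmetC i j x : gmet phi i j x = gmet phi j i x.
Proof. exact: dotvC. Qed.

Lemma gmatE x : gmat phi x = jac phi x *m (jac phi x)^T.
Proof. by apply/matrixP => i j; rewrite !mxE; apply: eq_bigr => c _; rewrite !mxE. Qed.

Lemma gmat_unitmx x : U x -> gmat phi x \in unitmx.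
Proof. by move=> Ux; rewrite gmatE gram_unitmx // phi_immersion. Qed.

Lemma partially_derivable_xTc k : partially_derivable (xTc phi k).
Proof.
move=> x Ux i; apply: derivable_sumr => l _; apply: derivable_mulr.
  apply: derivable_invmx => [|a b].
    by apply: filterS (open_nbhs_nbhs (conj oU Ux)); exact: gmat_unitmx.
  by under eq_fun do rewrite mxE; exact: partially_derivable_gmet.
by apply: derivable_dotv; [exact: derivable_phi|exact: derivable_dphi].
Qed.

Lemma sum_xTc_gmet x j : U x ->
  \sum_k xTc phi k x * gmet phi k j x = dotv (phi x) (dphi phi j x).
Proof.
move=> Ux; rewrite /xTc; under eq_bigr do rewrite big_distrl /=.
rewrite exchange_big /=.
transitivity (\sum_l dotv (phi x) (dphi phi l x) * (gmat phi x *m ginv phi x) j l).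
  apply: eq_bigr => l _; rewrite mxE big_distrr /=; apply: eq_bigr => k _.
  by rewrite !mxE gmetC; ring.
rewrite mulmxV ?gmat_unitmx // (bigD1 j) //= big1 ?addr0 => [|l lj].
  by rewrite mxE eqxx mulr1.
by rewrite mxE eq_sym (negbTE lj) mulr0.
Qed.

Lemma dotv_xN_dphi x j : U x -> dotv (xN phi x) (dphi phi j x) = 0.
Proof. by move=> Ux; rewrite dotvBl dotv_suml sum_xTc_gmet // subrr. Qed.

Lemma derivable_xN x i : U x -> derivable (xN phi) x (ebas R i).
Proof.
move=> Ux; apply/derivable_mxP => a c; rewrite (ord1 a).
have -> : (fun y => xN phi y 0 c) =
    (fun y => phi y 0 c - \sum_k xTc phi k y * dphi phi k y 0 c).
  apply: funext => y; rewrite !mxE summxE.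
  by congr (_ - _); apply: eq_bigr => k _; rewrite mxE.
apply: derivableB; first by have /derivable_mxP := derivable_phi (i := i) Ux.
apply: derivable_sumr => k _; apply: derivable_mulr; first exact: partially_derivable_xTc.
by have /derivable_mxP := derivable_dphi (j := k) (i := i) Ux.
Qed.

Lemma iterD_coord s c x : U x ->
  Defs.iterD s (fun y => phi y 0 c) x = Defs.iterD s phi x 0 c.
Proof.
elim: s x => [//|i s IH] x Ux /=.
rewrite /pd (derive_eq_on (g := fun y => Defs.iterD s phi y 0 c) _ Ux IH).
by rewrite derive_mx ?mxE //; exact: phi_smooth.
Qed.

Lemma derivable_iterD_coord s c x i : U x ->
  derivable (Defs.iterD s (fun y => phi y 0 c)) x (ebas R i).
Proof.
move=> Ux; apply: (derivable_eq_on (f := fun y => Defs.iterD s phi y 0 c) Ux).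
  by move=> y Uy; rewrite iterD_coord.
by have /derivable_mxP := @phi_smooth s i x Ux.
Qed.

Lemma dphi_sym x i j : U x -> pd i (dphi phi j) x = pd j (dphi phi i) x.
Proof.
move=> Ux; apply/rowP => c.
have d s k y : U y -> derivable (Defs.iterD s (fun z => phi z 0 c)) y (ebas R k).
  exact: derivable_iterD_coord.
transitivity (Defs.iterD [:: i; j] (fun y => phi y 0 c) x).
  exact: esym (iterD_coord [:: i; j] c Ux).
transitivity (Defs.iterD [:: j; i] (fun y => phi y 0 c) x); last first.
  exact: (iterD_coord [:: j; i] c Ux : _ = pd j (dphi phi i) x 0 c).
exact: (clairaut oU Ux (d [::] i) (d [::] j) (d [:: i] j) (d [:: j; i] i) (d [:: j; i] j)
  (d [:: i; j] i x Ux)).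
Qed.

Lemma pd_gmet x k i j : U x -> pd k (gmet phi i j) x =
  dotv (pd k (dphi phi i) x) (dphi phi j x) + dotv (dphi phi i x) (pd k (dphi phi j) x).
Proof. by move=> Ux; apply: derive_dotv; exact: derivable_dphi. Qed.

Lemma pd_sum_xTc_gmet x i j : U x ->
  \sum_k (pd i (xTc phi k) x * gmet phi k j x + xTc phi k x * pd i (gmet phi k j) x)
  = gmet phi i j x + dotv (phi x) (pd i (dphi phi j) x).
Proof.
move=> Ux.
have dxTc k := @partially_derivable_xTc k x Ux i.
have dgmet k := @partially_derivable_gmet k j x Ux i.
transitivity (\sum_k pd i (fun y => xTc phi k y * gmet phi k j y) x).
  by apply: eq_bigr => k _; symmetry; apply: derive_mulr.
transitivity (pd i (fun y => \sum_k xTc phi k y * gmet phi k j y) x).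
  by symmetry; apply: derive_sumr => k; exact: derivable_mulr.
rewrite /pd (derive_eq_on (g := fun y => dotv (phi y) (dphi phi j y)) _ Ux); last first.
  by move=> y Uy; exact: sum_xTc_gmet.
by rewrite derive_dotv //; [exact: derivable_phi|exact: derivable_dphi].
Qed.

Lemma shapeN_dotv x i j : U x ->
  shapeN phi i j x = dotv (xN phi x) (pd i (dphi phi j) x).
Proof.
move=> Ux; apply/eqP; rewrite /shapeN eqr_oppLR -subr_eq0 opprK.
rewrite -derive_dotv; [|exact: derivable_xN|exact: derivable_dphi].
rewrite (derive_eq_on (g := fun _ => 0 : R) _ Ux) ?derive_cst //.
by move=> y Uy; exact: dotv_xN_dphi.
Qed.

Lemma half_lieg x i j : U x ->
  2^-1 * lieg phi i j x = gmet phi i j x + shapeN phi i j x.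
Proof.
move=> Ux; have sym a b := dphi_sym a b Ux.
(* Equations are built by [have] and only then matched with the goal: elaborating
   them against the goal makes Coq unfold distinct second derivatives while trying
   to unify them, which does not terminate in reasonable time. *)
have lieg_sum : lieg phi i j x =
    \sum_k (pd i (xTc phi k) x * gmet phi k j x + xTc phi k x * pd i (gmet phi k j) x)
  + \sum_k (pd j (xTc phi k) x * gmet phi k i x + xTc phi k x * pd j (gmet phi k i) x)
  - 2 * \sum_k xTc phi k x * dotv (dphi phi k x) (pd i (dphi phi j) x).
  rewrite /lieg mulr_sumr -big_split -sumrB /=; apply: eq_bigr => k _.
  apply: (@lieg_summand_split R (dotv (pd i (dphi phi k) x) (dphi phi j x))
    (dotv (pd j (dphi phi k) x) (dphi phi i x))).
  - exact: gmetC.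
  - exact: pd_gmet i k j Ux.
  - have E := congr1
      (fun z => dotv (pd j (dphi phi k) x) (dphi phi i x) + dotv (dphi phi k x) z) (sym j i).
    have G := etrans (pd_gmet j k i Ux) E; exact: G.
  - have E := f_equal2 +%R (congr1 (fun z => dotv z (dphi phi j x)) (sym k i))
      (etrans (dotvC _ _) (congr1 (fun z => dotv z (dphi phi i x)) (sym k j))).
    have G := etrans (pd_gmet k i j Ux) E; exact: G.
have S2 : \sum_k (pd j (xTc phi k) x * gmet phi k i x + xTc phi k x * pd j (gmet phi k i) x)
    = gmet phi i j x + dotv (phi x) (pd i (dphi phi j) x).
  have E := f_equal2 +%R (gmetC j i x) (congr1 (dotv (phi x)) (sym j i)).
  have G := etrans (pd_sum_xTc_gmet j i Ux) E; exact: G.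
have sh : shapeN phi i j x = dotv (phi x) (pd i (dphi phi j) x)
    - \sum_k xTc phi k x * dotv (dphi phi k x) (pd i (dphi phi j) x).
  by rewrite shapeN_dotv // dotvBl dotv_suml.
have G := half_sum_split lieg_sum (pd_sum_xTc_gmet i j Ux) S2 sh; exact: G.
Qed.

End Submanifold.

Lemma soliton_eq_shift (R : comNzRingType) (br gm dX hL g S : R) : hL = g + S ->
  (hL + br = gm * g + dX <-> br = (gm - 1) * g + dX - S).
Proof.
move=> ->; split=> E; last by rewrite E; ring.
by apply: (addrI (g + S)); rewrite E; ring.
Qed.

Theorem theorem5p2 (R : realType) (n m : nat) (U : set 'rV[R]_n)
  (phi : 'rV[R]_n -> 'rV[R]_m) (beta gamma delta : 'rV[R]_n -> R) :
  open U ->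
  smooth_on U phi ->
  (forall u, U u -> row_free (jac phi u)) ->
  smooth_on U beta -> smooth_on U gamma -> smooth_on U delta ->
  ((forall u, U u -> forall i j : 'I_n,
      2^-1 * lieg phi i j u + beta u * ricci phi i j u
      = gamma u * gmet phi i j u + delta u * (xTflat phi i u * xTflat phi j u))
   <->
   (forall u, U u -> forall i j : 'I_n,
      beta u * ricci phi i j u
      = (gamma u - 1) * gmet phi i j u + delta u * (xTflat phi i u * xTflat phi j u)
        - shapeN phi i j u)).
Proof.
move=> oU phi_smooth phi_immersion _ _ _.
have shift u i j : U u -> _ := fun Uu => @soliton_eq_shift R (beta u * ricci phi i j u)
  (gamma u) (delta u * (xTflat phi i u * xTflat phi j u)) _ _ _
  (half_lieg oU phi_smooth phi_immersion i j Uu).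
by split=> soliton u Uu i j; apply/(shift u i j Uu); exact: soliton.
Qed.
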